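(* Let ${\bf F}^*_0(z)=\sum_n {\bf f}^*_0(n)z^n$, where ${\bf f}^*_0(n)$ is the total weight of secondary structures over $[n]$ containing the arc $(1,n)$, and let ${\bf F}_0(z)=\sum_n {\bf f}_0(n)z^n$, where ${\bf f}_0(n)$ is the total weight of all secondary structures over $[n]$ (including the empty structure for $n=0$). Then $$ {\bf F}^*_0(z)=\frac{6}{16}e^{0.5}z^2\frac{z}{1-z}+\frac{6}{16}e^{1}z^2\left(\frac{1}{1-z}\right)^2{\bf F}^*_0(z)+\frac{6}{16}e^{-5}z^2\frac{\left({\bf F}^*_0(z)\frac{1}{1-z}\right)^2}{1-{\bf F}^*_0(z)\frac{1}{1-z}}\frac{1}{1-z}, $$ ${\bf F}^*_0(z)$ is the unique formal power series with zero constant term satisfying this equation, and $$ {\bf F}_0(z)=\frac{1}{1-z}\cdot\frac{1}{1-{\bf F}^*_0(z)\frac{1}{1-z}}. $$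
   Context: A secondary structure over $[n]=\{1,\dots,n\}$ is a set of arcs $(i,j)$, $1\le i<j\le n$, each vertex in at most one arc, with no two arcs crossing (no $i<k<j<l$ with $(i,j),(k,l)$ both arcs) and no arc of the form $(i,i+1)$. For an arc $(i,j)$, the arcs directly nested in it are the arcs $(k,l)$ with $i<k<l<j$ not contained in any other arc $(k',l')$ with $i<k'<k<l<l'<j$. The loop closed by $(i,j)$ is a hairpin loop if $(i,j)$ has no directly nested arc, an interior loop (including stacks and bulges) if it has exactly one directly nested arc, and a multi-loop if it has at least two directly nested arcs. The weight of a secondary structure is $(6/16)^{\#\mathrm{arcs}}\cdot e^{0.5\,h}\cdot e^{1\cdot i}\cdot e^{-5\,m}$, where $h,i,m$ are the numbers of hairpin loops, interior loops and multi-loops, respectively, and $e$ is Euler's number. *)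

From mathcomp Require Import all_boot all_order all_algebra.
From mathcomp Require Import reals sequences exp.
Set Implicit Arguments. Unset Strict Implicit. Unset Printing Implicit Defensive.
Import Order.TTheory GRing.Theory Num.Theory.
Local Open Scope ring_scope.

(* Vertex k of [n] = {1..n} is represented by the ordinal (k-1) : 'I_n.
   An arc (i,j) is a pair (a.1, a.2) of ordinals. *)
Definition arc n := ('I_n * 'I_n)%type.

Definition secondary n (S : {set arc n}) : bool :=
  [forall a in S, (a.1.+1 < a.2)%N] &&
  [forall a in S, forall b in S, (a != b) ==>
     [&& a.1 != b.1, a.1 != b.2, a.2 != b.1 & a.2 != b.2]] &&
  [forall a in S, forall b in S,
     ~~ [&& (a.1 < b.1)%N, (b.1 < a.2)%N & (a.2 < b.2)%N]].

Definition directly_nested n (S : {set arc n}) (a b : arc n) : bool :=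
  [&& b \in S, (a.1 < b.1)%N, (b.1 < b.2)%N, (b.2 < a.2)%N &
   ~~ [exists c in S, [&& (a.1 < c.1)%N, (c.1 < b.1)%N, (b.2 < c.2)%N & (c.2 < a.2)%N]]].

Definition n_nested n (S : {set arc n}) (a : arc n) : nat :=
  #|[set b | directly_nested S a b]|.

Definition n_hairpin n (S : {set arc n}) : nat := #|[set a in S | n_nested S a == 0%N]|.
Definition n_interior n (S : {set arc n}) : nat := #|[set a in S | n_nested S a == 1%N]|.
Definition n_multi n (S : {set arc n}) : nat := #|[set a in S | (2 <= n_nested S a)%N]|.

Definition weight (R : realType) n (S : {set arc n}) : R :=
  (6 / 16) ^+ #|S| * expR (2^-1 * (n_hairpin S)%:R) * expR (1 * (n_interior S)%:R)
  * expR (-5 * (n_multi S)%:R).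

Definition f0 (R : realType) (n : nat) : R :=
  \sum_(S : {set arc n} | secondary S) weight R S.

Definition f0star (R : realType) (n : nat) : R :=
  \sum_(S : {set arc n} | secondary S &&
        [exists a in S, (val a.1 == 0%N) && (val a.2 == n.-1)]) weight R S.

Definition fps (R : realType) := nat -> R.

Section FPS.
Variable R : realType.
Definition fps_add (f g : fps R) : fps R := fun n => f n + g n.
Definition fps_scale (c : R) (f : fps R) : fps R := fun n => c * f n.
Definition fps_mul (f g : fps R) : fps R :=
  fun n => \sum_(i < n.+1) f i * g (n - i)%N.
Definition fps_one : fps R := fun n => (n == 0%N)%:R.
Definition fps_Xn (k : nat) : fps R := fun n => (n == k)%:R.
Definition fps_pow (f : fps R) (k : nat) : fps R := iter k (fps_mul f) fps_one.
Definition fps_geom : fps R := fun _ => 1.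
(* 1/(1-G) = sum_k G^k, the inverse of 1 - G, for G with zero constant term
   (the coefficient of z^n only involves G^k for k <= n). *)
Definition fps_inv1m (G : fps R) : fps R :=
  fun n => \sum_(k < n.+1) fps_pow G k n.
End FPS.

Definition rhs_eq (R : realType) (F : fps R) : fps R :=
  let c : R := 6 / 16 in
  let z2 := fps_Xn R 2 in
  let Fg := fps_mul F (fps_geom R) in
  fps_add
    (fps_scale (c * expR (2^-1))
       (fps_mul z2 (fps_mul (fps_Xn R 1) (fps_geom R))))
  (fps_add
    (fps_scale (c * expR 1)
       (fps_mul z2 (fps_mul (fps_pow (fps_geom R) 2) F)))
    (fps_scale (c * expR (-5))
       (fps_mul z2 (fps_mul (fps_mul (fps_pow Fg 2) (fps_inv1m Fg)) (fps_geom R))))).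

(* Read a structure on a window of vertices from the left: the first vertex is
   either unpaired, or it opens an arc (i, j), and then the structure is the
   juxtaposition of a structure closed by (i, j) and an arbitrary structure on the
   vertices after j.  Refining by the number k of top-level arcs, this shows that the
   weight of the structures on a window of length L with k top-level arcs is the
   coefficient of z^L in (F*_0 g)^k g, with g = 1/(1-z).  Conversely, removing the
   closing arc of a structure in F*_0 leaves a structure on the inner window whose
   top-level arcs are the arcs directly nested in the removed one, so the removed arc
   contributes (6/16) e^0.5, (6/16) e or (6/16) e^-5 according as there are 0, 1 or
   at least 2 of them.  Summing over k gives both identities. *)

From Pilot Require Import Defs.
From mathcomp Require Import all_boot all_order all_algebra.
From mathcomp Require Import reals sequences exp.
From mathcomp Require Import zify ring.
Unset Printing Implicit Defensive.
Import Order.TTheory GRing.Theory Num.Theory.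
Local Open Scope ring_scope.

Section Truncation.
Context {R : realType}.
Implicit Types (f g G : fps R) (p q : {poly R}).

Definition fps_trunc n f : {poly R} := \poly_(i < n.+1) f i.

Definition fps_agree n f p := forall i, (i <= n)%N -> f i = p`_i.

Lemma fps_agree_trunc n f : fps_agree n f (fps_trunc n f).
Proof. by move=> i hi; rewrite coef_poly ltnS hi. Qed.

Lemma fps_agreeM {n f g p q} :
  fps_agree n f p -> fps_agree n g q -> fps_agree n (fps_mul f g) (p * q).
Proof.
move=> hf hg i hi; rewrite /fps_mul coefM; apply: eq_bigr => j _.
have hj : (j <= i)%N by rewrite -ltnS.
by rewrite hf ?hg //; [exact: leq_trans (leq_subr _ _) hi | exact: leq_trans hj hi].
Qed.

Lemma fps_agree1 n : fps_agree n (fps_one R) 1.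
Proof. by move=> i _; rewrite coef1. Qed.

Lemma fps_agreeXn n k : fps_agree n (fps_Xn R k) 'X^k.
Proof. by move=> i _; rewrite coefXn. Qed.

Lemma fps_agreeX {n f p} k : fps_agree n f p -> fps_agree n (fps_pow f k) (p ^+ k).
Proof.
move=> hf; elim: k => [|k IH]; first exact: fps_agree1.
by rewrite exprS; apply: fps_agreeM.
Qed.

Lemma coef_expr_lt {p k i} : p`_0 = 0 -> (i < k)%N -> (p ^+ k)`_i = 0.
Proof.
move=> p0; elim: k i => [//|k IH] i hi.
rewrite exprS coefM big1 // => -[[|j] hj] _ /=; first by rewrite p0 mul0r.
by rewrite IH ?mulr0 //; lia.
Qed.

Lemma coef_exprM_lt {p q k i} : p`_0 = 0 -> (i < k)%N -> (p ^+ k * q)`_i = 0.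
Proof.
move=> p0 hi; rewrite coefM big1 // => j _.
by rewrite coef_expr_lt ?mul0r //; have := ltn_ord j; lia.
Qed.

(* Since [G] has no constant term, only the powers [G ^+ k] with [k <= n]
   contribute to the coefficients of [1/(1-G)] up to [z^n]. *)
Lemma fps_agree_inv1m {n G p} : fps_agree n G p -> G 0%N = 0 ->
  fps_agree n (fps_inv1m G) (\sum_(k < n.+1) p ^+ k).
Proof.
move=> hG G0 i hi; have p0 : p`_0 = 0 by rewrite -hG.
rewrite /fps_inv1m coef_sum (big_ord_widen n.+1 (fun k => fps_pow G k i)) //.
rewrite big_mkcond /=; apply: eq_bigr => k _.
case: ifP => hk; first by rewrite (fps_agreeX k hG i hi).
by rewrite coef_expr_lt //; lia.
Qed.

Lemma fps_mul_geomE f n : fps_mul f (fps_geom R) n = \sum_(j < n.+1) f j.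
Proof. by apply: eq_bigr => j _; rewrite /fps_geom mulr1. Qed.

Lemma fps_mul_geom0 f : fps_mul f (fps_geom R) 0%N = f 0%N.
Proof. by rewrite fps_mul_geomE big_ord1. Qed.

Lemma fps_mul_X2E f n :
  fps_mul (fps_Xn R 2) f n = if (n < 2)%N then 0 else f (n - 2)%N.
Proof.
rewrite (fps_agreeM (fps_agreeXn n 2) (fps_agree_trunc n f) n (leqnn n)) coefXnM.
by case: ifP => // _; rewrite coef_poly; case: ifP => //; lia.
Qed.

End Truncation.

Set Implicit Arguments. Unset Strict Implicit.

Section SecondaryStructures.
Variable R : realType.
Variable N : nat.
Local Notation A := (Defs.arc N).
Implicit Types (S T U V : {set A}) (a b c : A).

Lemma arc_eqP a b : a = b <-> ((a.1 : nat) = b.1 /\ (a.2 : nat) = b.2).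
Proof.
split; first by move=> ->.
by case: a b => [x y] [x' y'] /= [/val_inj -> /val_inj ->].
Qed.

Lemma secondary_gap S a : secondary S -> a \in S -> (a.1.+1 < a.2)%N.
Proof. by case/andP => /andP[/forall_inP h _] _ /h. Qed.

Lemma secondary_lt S a : secondary S -> a \in S -> (a.1 < a.2)%N.
Proof. by move=> sS aS; have := secondary_gap sS aS; lia. Qed.

Lemma secondary_disjoint S a b : secondary S -> a \in S -> b \in S -> a != b ->
  [/\ (a.1 : nat) <> b.1, (a.1 : nat) <> b.2, (a.2 : nat) <> b.1 & (a.2 : nat) <> b.2].
Proof.
case/andP => /andP[_ /forall_inP h] _ aS bS ab.
move/forall_inP: (h a aS) => /(_ b bS) /implyP /(_ ab) /and4P[h1 h2 h3 h4].
by split; apply/eqP.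
Qed.

Lemma secondary_noncrossing S a b : secondary S -> a \in S -> b \in S ->
  ~~ [&& (a.1 < b.1)%N, (b.1 < a.2)%N & (a.2 < b.2)%N].
Proof.
case/andP => _ /forall_inP h aS bS.
by move/forall_inP: (h a aS) => /(_ b bS).
Qed.

Lemma secondary_nested S a b : secondary S -> a \in S -> b \in S ->
  (a.1 < b.1)%N -> (b.1 < a.2)%N -> (b.2 <= a.2)%N.
Proof.
move=> sS aS bS h1 h2; have := secondary_noncrossing sS aS bS.
by rewrite h1 h2 -leqNgt.
Qed.

Lemma secondary_share_eq S a b : secondary S -> a \in S -> b \in S ->
  ((a.1 : nat) = b.1 \/ (a.1 : nat) = b.2 \/ (a.2 : nat) = b.1 \/ (a.2 : nat) = b.2) ->
  a = b.
Proof.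
move=> sS aS bS h; apply/eqP; apply/negPn/negP => ab.
by case: (secondary_disjoint sS aS bS ab) => h1 h2 h3 h4; case: h => [|[|[]]].
Qed.

Lemma secondaryI S :
  (forall a, a \in S -> (a.1.+1 < a.2)%N) ->
  (forall a b, a \in S -> b \in S -> a != b ->
     [/\ (a.1 : nat) <> b.1, (a.1 : nat) <> b.2, (a.2 : nat) <> b.1 & (a.2 : nat) <> b.2]) ->
  (forall a b, a \in S -> b \in S ->
     ~~ [&& (a.1 < b.1)%N, (b.1 < a.2)%N & (a.2 < b.2)%N]) ->
  secondary S.
Proof.
move=> h1 h2 h3; apply/andP; split; [apply/andP; split|].
- by apply/forall_inP.
- apply/forall_inP => a aS; apply/forall_inP => b bS; apply/implyP => ab.
  by case: (h2 a b aS bS ab) => /eqP-> /eqP-> /eqP-> /eqP->.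
- by apply/forall_inP => a aS; apply/forall_inP => b bS; exact: h3.
Qed.

Lemma secondary_subset S T : T \subset S -> secondary S -> secondary T.
Proof.
move=> /subsetP sub sS; apply: secondaryI.
- by move=> a /sub aS; exact: secondary_gap sS aS.
- by move=> a b /sub aS /sub bS; exact: secondary_disjoint sS aS bS.
- by move=> a b /sub aS /sub bS; exact: secondary_noncrossing sS aS bS.
Qed.

Lemma secondary0 : secondary (set0 : {set A}).
Proof. by apply: secondaryI => a; rewrite inE. Qed.

Definition loop_exponent (k : nat) : R :=
  if k == 0%N then 2^-1 else if k == 1%N then 1 else -5.

Definition arc_weight (k : nat) : R := 6 / 16 * expR (loop_exponent k).

Definition encloses a c := (a.1 < c.1)%N && (c.2 < a.2)%N.

Lemma sum_const_pred (P : pred A) (x : R) :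
  \sum_(a | P a) x = x * (#|[set a | P a]|)%:R.
Proof.
rewrite (eq_bigl (fun a => a \in [set a | P a])) => [|a]; last by rewrite inE.
by rewrite sumr_const mulr_natr.
Qed.

Lemma weight_prod S : weight R S = \prod_(a in S) arc_weight (n_nested S a).
Proof.
rewrite /arc_weight big_split /= prodr_const -expR_sum /weight -!mulrA -!expRD.
congr (_ * expR _).
rewrite (bigID (fun a => n_nested S a == 0%N)) /=.
rewrite (eq_bigr (fun _ => 2^-1)) => [|a /andP[_ /eqP ->]] //.
rewrite sum_const_pred; congr (_ + _).
rewrite (bigID (fun a => n_nested S a == 1%N)) /=; congr (_ + _).
  rewrite (eq_bigr (fun _ => 1)) => [|a /andP[/andP[_ h0] /eqP ->]] //.
  rewrite sum_const_pred /n_interior; congr (_ * _%:R).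
  apply: eq_card => a; rewrite !inE.
  by case: (n_nested S a) => [|[|k]]; rewrite ?andbF ?andbT.
rewrite (eq_bigr (fun _ => -5)) => [|a /andP[/andP[_ h0] h1]]; last first.
  by rewrite /loop_exponent; move: h0 h1; case: (n_nested S a) => [|[|k]].
rewrite sum_const_pred /n_multi; congr (_ * _%:R).
apply: eq_card => a; rewrite !inE.
by case: (n_nested S a) => [|[|k]]; rewrite ?andbF ?andbT.
Qed.

Lemma n_nested_local S S' a :
  (forall c, encloses a c -> (c \in S) = (c \in S')) -> n_nested S a = n_nested S' a.
Proof.
move=> h; apply: eq_card => b; rewrite !inE /directly_nested.
have -> : [exists c in S, [&& (a.1 < c.1)%N, (c.1 < b.1)%N, (b.2 < c.2)%N & (c.2 < a.2)%N]]
        = [exists c in S', [&& (a.1 < c.1)%N, (c.1 < b.1)%N, (b.2 < c.2)%N & (c.2 < a.2)%N]].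
  apply/existsP/existsP => -[c /andP[cS /and4P[h1 h2 h3 h4]]]; exists c.
    by rewrite -h ?cS ?h1 ?h2 ?h3 ?h4 // /encloses h1 h4.
  by rewrite h ?cS ?h1 ?h2 ?h3 ?h4 // /encloses h1 h4.
case h1: (a.1 < b.1)%N; rewrite ?andFb ?andbF //.
case h2: (b.2 < a.2)%N; rewrite ?andFb ?andbF ?andbT //.
by rewrite h // /encloses h1 h2.
Qed.

Definition is_top S b := [forall c in S, ~~ encloses c b].

Definition n_top S := #|[set b in S | is_top S b]|.

Lemma n_top0 : n_top set0 = 0%N.
Proof. by apply/eqP; rewrite cards_eq0; apply/eqP/setP => b; rewrite !inE. Qed.

Lemma n_top_le S : (n_top S <= N * N)%N.
Proof.
apply: leq_trans (_ : #|S| <= N * N)%N.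
  by apply: subset_leq_card; apply/subsetP => b; rewrite inE => /andP[].
by apply: leq_trans (max_card _) _; rewrite card_prod card_ord.
Qed.

Definition top_bound := (N * N).+1.

Lemma partition_n_top (P : pred {set A}) (F : nat -> {set A} -> R) :
  \sum_(T | P T) F (n_top T) T
  = \sum_(k < top_bound) \sum_(T | P T && (n_top T == k)) F k T.
Proof.
rewrite (partition_big (fun T => inord (n_top T) : 'I_top_bound) xpredT) //=.
apply: eq_bigr => k _; apply: eq_big => T.
  by rewrite -val_eqE /= inordK // ltnS n_top_le.
by move=> /andP[_ /eqP <-]; rewrite inordK // ltnS n_top_le.
Qed.

Section Juxtaposition.
Variables (U V : {set A}) (mid : nat).
Hypotheses (sU : secondary U) (sV : secondary V).
Hypothesis U_left : forall a, a \in U -> (a.2 < mid)%N.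
Hypothesis V_right : forall a, a \in V -> (mid <= a.1)%N.

Lemma juxt_notin a : a \in U -> a \notin V.
Proof.
move=> aU; apply/negP => aV.
by have := U_left aU; have := V_right aV; have := secondary_lt sU aU; lia.
Qed.

Lemma secondary_juxt : secondary (U :|: V).
Proof.
apply: secondaryI.
- by move=> a; rewrite inE => /orP[] ?; [apply: (secondary_gap sU) | apply: (secondary_gap sV)].
- move=> a b; rewrite !inE => /orP[] aS /orP[] bS ab.
  + exact: (secondary_disjoint sU).
  + have := U_left aS; have := V_right bS.
    by have := secondary_lt sU aS; have := secondary_lt sV bS; split; lia.
  + have := V_right aS; have := U_left bS.
    by have := secondary_lt sV aS; have := secondary_lt sU bS; split; lia.
  + exact: (secondary_disjoint sV).
- move=> a b; rewrite !inE => /orP[] aS /orP[] bS.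
  + exact: (secondary_noncrossing sU).
  + have := U_left aS; have := V_right bS; have := secondary_lt sU aS.
    by have := secondary_lt sV bS; move=> *; apply/negP => /and3P[*]; lia.
  + have := V_right aS; have := U_left bS; have := secondary_lt sV aS.
    by have := secondary_lt sU bS; move=> *; apply/negP => /and3P[*]; lia.
  + exact: (secondary_noncrossing sV).
Qed.

Lemma n_top_juxt : n_top (U :|: V) = (n_top U + n_top V)%N.
Proof.
rewrite /n_top.
have -> : [set b in U :|: V | is_top (U :|: V) b] =
          [set b in U | is_top U b] :|: [set b in V | is_top V b].
  apply/setP => b; rewrite !inE.
  case bU: (b \in U); case bV: (b \in V) => //=.
  - by move: (juxt_notin bU); rewrite bV.
  - rewrite orbF /is_top; apply/forall_inP/forall_inP => h c cS.
      by apply: h; rewrite inE cS.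
    move: cS; rewrite inE => /orP[]; first exact: h.
    move=> cV; rewrite /encloses; have := U_left bU; have := V_right cV.
    have := secondary_lt sU bU; have := secondary_lt sV cV.
    by move=> *; apply/negP => /andP[*]; lia.
  - rewrite /is_top; apply/forall_inP/forall_inP => h c cS.
      by apply: h; rewrite inE cS orbT.
    move: cS; rewrite inE => /orP[]; last exact: h.
    move=> cU; rewrite /encloses; have := V_right bV; have := U_left cU.
    have := secondary_lt sV bV; have := secondary_lt sU cU.
    by move=> *; apply/negP => /andP[*]; lia.
rewrite cardsU.
suff -> : [set b in U | is_top U b] :&: [set b in V | is_top V b] = set0.
  by rewrite cards0 subn0.
apply/setP => b; rewrite !inE.
by case bU: (b \in U); rewrite //= (negbTE (juxt_notin bU)) andbF.
Qed.

Lemma weight_juxt : weight R (U :|: V) = weight R U * weight R V.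
Proof.
rewrite !weight_prod (eq_bigl [predU U & V]) => [|a]; last by rewrite !inE.
rewrite bigU; last first.
  by rewrite disjoint_subset; apply/subsetP => a aU; rewrite inE juxt_notin.
congr (_ * _); apply: eq_bigr => a aS; congr arc_weight; apply: n_nested_local => c.
- rewrite /encloses inE => /andP[h1 h2]; case cV: (c \in V); rewrite ?orbF //.
  by have := U_left aS; have := V_right cV; have := secondary_lt sV cV; lia.
- rewrite /encloses inE => /andP[h1 h2]; case cU: (c \in U) => //=.
  by have := V_right aS; have := U_left cU; have := secondary_lt sU cU; lia.
Qed.

End Juxtaposition.

Section Enclosure.
Variables (a0 : A) (T : {set A}).
Hypothesis sT : secondary T.
Hypothesis a0_encloses : forall b, b \in T -> encloses a0 b.

Lemma secondary_enclose : (a0.1.+1 < a0.2)%N -> secondary (a0 |: T).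
Proof.
move=> h0; apply: secondaryI.
- by move=> a; rewrite in_setU1 => /orP[/eqP->//|aT]; exact: secondary_gap sT aT.
- move=> a b; rewrite !in_setU1 => /orP[/eqP->|aT] /orP[/eqP->|bT] ab.
  + by rewrite eqxx in ab.
  + by have /andP[h1 h2] := a0_encloses bT; have := secondary_lt sT bT; split; lia.
  + by have /andP[h1 h2] := a0_encloses aT; have := secondary_lt sT aT; split; lia.
  + exact: secondary_disjoint sT aT bT ab.
- move=> a b; rewrite !in_setU1 => /orP[/eqP->|aT] /orP[/eqP->|bT].
  + by rewrite ltnn.
  + by have /andP[h1 h2] := a0_encloses bT; apply/negP => /and3P[*]; lia.
  + by have /andP[h1 h2] := a0_encloses aT; apply/negP => /and3P[*]; lia.
  + exact: secondary_noncrossing sT aT bT.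
Qed.

(* The arcs directly nested in [a0] are exactly the top-level arcs of [T]. *)
Lemma weight_enclose : a0 \notin T ->
  weight R (a0 |: T) = arc_weight (n_top T) * weight R T.
Proof.
move=> a0T; rewrite !weight_prod big_setU1 //=; congr (arc_weight _ * _).
  apply: eq_card => b; rewrite !inE /directly_nested /is_top.
  case bT: (b \in T); last first.
    by rewrite in_setU1 bT orbF; case: eqP => [->|]; rewrite ?ltnn ?andbF.
  have /andP[h1 h2] := a0_encloses bT; have h3 := secondary_lt sT bT.
  rewrite in_setU1 bT orbT h1 h2 h3 /=.
  apply/negP/forall_inP => [hne c cT | hall].
    apply/negP => /andP[c1 c2]; apply: hne; apply/existsP; exists c.
    have /andP[d1 d2] := a0_encloses cT.
    by rewrite in_setU1 cT orbT /=; apply/and4P; split; lia.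
  move/existsP => [c /andP[cS /and4P[e1 e2 e3 e4]]]; move: cS; rewrite in_setU1.
  case/orP => [/eqP ec|cT]; first by rewrite ec ltnn in e1.
  by have := hall c cT; rewrite /encloses e2 e3.
apply: eq_bigr => a aT; congr arc_weight; apply: n_nested_local => c.
rewrite /encloses in_setU1 => /andP[c1 c2]; case: eqP => // ec.
by have /andP[d1 d2] := a0_encloses aT; rewrite ec in c1; lia.
Qed.

End Enclosure.

Lemma n_top_enclosed S a0 : secondary S -> a0 \in S ->
  (forall b, b \in S -> (a0.1 <= b.1)%N /\ (b.2 <= a0.2)%N) -> n_top S = 1%N.
Proof.
move=> sS aS hb; rewrite /n_top (_ : [set b in S | is_top S b] = [set a0]) ?cards1 //.
apply/setP => b; rewrite !inE; case: (b =P a0) => [->|nb].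
  rewrite aS /=; apply/forall_inP => c cS; have [h1 h2] := hb c cS.
  by rewrite /encloses; apply/negP => /andP[*]; lia.
case bS: (b \in S) => //=; apply/negP => /forall_inP /(_ a0 aS); rewrite /encloses.
have [h1 h2] := hb b bS.
have [d1 _ _ d4] := secondary_disjoint sS aS bS (introN eqP (fun e => nb (esym e))).
by move/negP; apply; apply/andP; split; lia.
Qed.

End SecondaryStructures.

Section Windows.
Variable R : realType.
Variable N : nat.
Local Notation A := (Defs.arc N).
Implicit Types (S T X Y : {set A}) (a b : A).

(* Vertices [i, ..., i + L - 1] (0-based). *)
Definition in_window i L a := (i <= a.1)%N && (a.2 < i + L)%N.
Definition within i L S := [forall a in S, in_window i L a].
Definition has_arc i j S :=
  [exists a in S, (nat_of_ord a.1 == i) && (nat_of_ord a.2 == j)].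

Definition wtop k i L : R :=
  \sum_(S | [&& secondary S, within i L S & n_top S == k]) weight R S.
Definition wtop_pred k i L : R :=
  \sum_(S | [&& secondary S, within i L S & (n_top S).+1 == k]) weight R S.
Definition wclosed i L : R :=
  \sum_(S | [&& secondary S, within i L S & has_arc i (i + L).-1 S]) weight R S.

Lemma within_bounds i L S a : within i L S -> a \in S -> (i <= a.1)%N /\ (a.2 < i + L)%N.
Proof. by move/forall_inP => h /h /andP[]. Qed.

Lemma withinI i L S :
  (forall a, a \in S -> (i <= a.1)%N /\ (a.2 < i + L)%N) -> within i L S.
Proof. by move=> h; apply/forall_inP => a /h [h1 h2]; apply/andP. Qed.

Lemma has_arcE i j S a0 :
  (a0.1 : nat) = i -> (a0.2 : nat) = j -> has_arc i j S = (a0 \in S).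
Proof.
move=> e1 e2; apply/existsP/idP => [[a /andP[aS /andP[/eqP h1 /eqP h2]]] | h].
  by have -> : a0 = a by apply/arc_eqP; split; [rewrite e1 -h1 | rewrite e2 -h2].
by exists a0; rewrite h e1 e2 !eqxx.
Qed.

Lemma has_arcP i j S : has_arc i j S ->
  exists a : A, [/\ a \in S, (a.1 : nat) = i & (a.2 : nat) = j].
Proof. by case/existsP => a /andP[aS /andP[/eqP h1 /eqP h2]]; exists a. Qed.

Lemma wtop_pred0 i L : wtop_pred 0 i L = 0.
Proof. by rewrite /wtop_pred big_pred0 // => S /=; rewrite !andbF. Qed.

Lemma wtop_predS k i L : wtop_pred k.+1 i L = wtop k i L.
Proof. by []. Qed.

Lemma within0 i S : secondary S -> within i 0 S -> S = set0.
Proof.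
move=> sS iS; apply/setP => a; rewrite inE; apply/negbTE/negP => aS.
by have [h1 h2] := within_bounds iS aS; have := secondary_lt sS aS; lia.
Qed.

Lemma wtop0 k i : wtop k i 0 = (k == 0%N)%:R.
Proof.
rewrite /wtop; case: k => [|k].
  rewrite (big_pred1 set0) ?weight_prod ?big_set0 // => S /=.
  apply/idP/eqP => [/and3P[sS iS _]|->]; first exact: within0 sS iS.
  by rewrite secondary0 n_top0 andbT /=; apply/forall_inP => a; rewrite inE.
rewrite big_pred0 // => S; apply/negP => /and3P[sS iS].
by rewrite (within0 sS iS) n_top0.
Qed.

Lemma wclosed_small i L : (L <= 2)%N -> wclosed i L = 0.
Proof.
move=> hL; rewrite /wclosed big_pred0 // => S; apply/negP.
move=> /and3P[sS _ /has_arcP[a [aS h1 h2]]].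
by have := secondary_gap sS aS; lia.
Qed.

Lemma wclosed_rec i L : (i + L.+3 <= N)%N ->
  wclosed i L.+3 = \sum_(k < top_bound N) arc_weight R k * wtop k i.+1 L.+1.
Proof.
move=> hN.
have hx : (i < N)%N by lia.
have hy : (i + L.+2 < N)%N by lia.
pose a0 : A := (Ordinal hx, Ordinal hy).
have a01 : (a0.1 : nat) = i by [].
have a02 : (a0.2 : nat) = (i + L.+3).-1 by rewrite /=; lia.
transitivity (\sum_(T | secondary T && within i.+1 L.+1 T)
                 arc_weight R (n_top T) * weight R T); last first.
  rewrite (partition_n_top _ (fun k T => arc_weight R k * weight R T)).
  apply: eq_bigr => k _; rewrite /wtop big_distrr /=.
  by apply: eq_bigl => T; rewrite andbA.
rewrite /wclosed (reindex_onto (fun T => a0 |: T) (fun S => S :\ a0)) /=; last first.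
  by move=> S /and3P[_ _]; rewrite (has_arcE _ a01 a02) => h; rewrite setD1K.
have enc T : within i.+1 L.+1 T -> forall b, b \in T -> encloses a0 b.
  by move=> iT b bT; have [h1 h2] := within_bounds iT bT; apply/andP; rewrite a01 /=; lia.
have a0T T : within i.+1 L.+1 T -> a0 \notin T.
  by move=> iT; apply/negP => /(within_bounds iT); rewrite a01; lia.
have within_del S : secondary S -> within i L.+3 S -> a0 \in S ->
    within i.+1 L.+1 (S :\ a0).
  move=> sS iS hS; apply: withinI => b; rewrite in_setD1 => /andP[ba0 bS].
  have [h1 h2] := within_bounds iS bS.
  have [d1 _ _ d4] := secondary_disjoint sS hS bS (contra_neq (fun h => esym h) ba0).
  by rewrite a01 a02 in d1 d4; lia.
apply: eq_big => T.
  apply/idP/idP => [/andP[/and3P[sS iS hS] /eqP eT] | /andP[sT iT]].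
    rewrite (has_arcE _ a01 a02) in hS; rewrite -eT within_del //.
    by rewrite (secondary_subset (subsetDl _ _) sS).
  rewrite setU1K ?a0T // eqxx andbT (has_arcE _ a01 a02) setU11 andbT.
  rewrite secondary_enclose //=; [| exact: enc iT | by rewrite /a0 /=; lia].
  apply: withinI => b; rewrite in_setU1 => /orP[/eqP->|bT]; first by rewrite /a0 /=; lia.
  by have [h1 h2] := within_bounds iT bT; lia.
move=> /andP[/and3P[sS iS hS] /eqP eT].
rewrite (has_arcE _ a01 a02) in hS.
have sT : secondary T by rewrite -eT; apply: secondary_subset sS; apply: subsetDl.
have iT : within i.+1 L.+1 T by rewrite -eT within_del.
by rewrite weight_enclose // ?a0T //; apply: enc.
Qed.

Definition starts_at i a := nat_of_ord a.1 == i.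

Lemma starts_atP i S :
  [exists a in S, starts_at i a] -> exists a : A, a \in S /\ (a.1 : nat) = i.
Proof. by case/existsP => a /andP[aS /eqP h]; exists a. Qed.

Lemma has_arc_starts_at i j S : has_arc i j S -> [exists a in S, starts_at i a].
Proof.
by case/has_arcP => a [aS h1 _]; apply/existsP; exists a; rewrite aS /starts_at h1 eqxx.
Qed.

Lemma within_shift i L S :
  within i L.+1 S && ~~ [exists a in S, starts_at i a] = within i.+1 L S.
Proof.
apply/idP/idP => [/andP[h hn] | h].
  apply: withinI => a aS; have [h1 h2] := within_bounds h aS.
  have : nat_of_ord a.1 != i.
    by apply: contra hn => ha; apply/existsP; exists a; rewrite aS.
  by move/eqP => ?; lia.
apply/andP; split.
  by apply: withinI => a aS; have [h1 h2] := within_bounds h aS; split; lia.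
by apply/negP => /starts_atP[a [aS e]]; have [h1 _] := within_bounds h aS; lia.
Qed.

(* Exactly one window length [m] makes [(i, i + m - 1)] an arc of [S]. *)
Lemma sum_first_arc i L S (x : R) :
  secondary S -> within i L.+1 S -> [exists a in S, starts_at i a] ->
  \sum_(m < L.+2) (if has_arc i (i + m).-1 S then x else 0) = x.
Proof.
move=> sS iS /starts_atP[a [aS a1]].
have [_ a2] := within_bounds iS aS; have a12 := secondary_gap sS aS.
have hm : (a.2.+1 - i < L.+2)%N by lia.
rewrite -big_mkcond (big_pred1 (Ordinal hm)) // => m /=.
apply/idP/eqP => [/has_arcP[b [bS b1 b2]] | em].
  have eb : b = a by apply: (secondary_share_eq sS bS aS); left; lia.
  by apply: val_inj => /=; rewrite eb in b2; lia.
by rewrite (has_arcE _ a1 (_ : (a.2 : nat) = (i + m).-1)) // em /=; lia.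
Qed.

Lemma within_in_window b i L S : within i L S -> b \in S -> in_window i L b.
Proof. by move=> /forall_inP h /h. Qed.

Lemma in_window_before b i m L S :
  secondary S -> within (i + m) L S -> b \in S -> in_window i m b = false.
Proof.
move=> sS iS bS; have [h1 h2] := within_bounds iS bS; have := secondary_lt sS bS.
by rewrite /in_window => ?; apply/negP => /andP[*]; lia.
Qed.

Lemma in_window_after b i m L S :
  secondary S -> within i m S -> b \in S -> in_window (i + m) L b = false.
Proof.
move=> sS iS bS; have [h1 h2] := within_bounds iS bS; have := secondary_lt sS bS.
by rewrite /in_window => ?; apply/negP => /andP[*]; lia.
Qed.

Section FirstArc.
Variables (i L m : nat) (a0 : A).
Hypotheses (m_ge2 : (2 <= m)%N) (m_le : (m <= L.+1)%N).
Hypotheses (a01 : (a0.1 : nat) = i) (a02 : (a0.2 : nat) = (i + m).-1).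

Lemma in_window_split S b : secondary S -> within i L.+1 S -> a0 \in S -> b \in S ->
  in_window i m b || in_window (i + m) (L.+1 - m) b.
Proof.
move=> sS iS aS bS; have [h1 h2] := within_bounds iS bS.
rewrite /in_window; case: (b =P a0) => [->|nb].
  by apply/orP; left; apply/andP; split; lia.
have [d1 d2 d3 d4] := secondary_disjoint sS aS bS (introN eqP (fun e => nb (esym e))).
have hc := secondary_nested sS aS bS; have hb := secondary_lt sS bS.
rewrite a01 a02 in d1 d2 d3 d4 hc.
by apply/orP; case: (ltnP b.1 (i + m)) => hb1; [left|right]; apply/andP; split; lia.
Qed.

(* A structure whose first arc is [a0] is the juxtaposition of a closed structure
   on [i, i + m) and an arbitrary one on the rest of the window. *)
Lemma first_arc_split_pred k X Y :
  ([&& secondary (X :|: Y), within i L.+1 (X :|: Y) & n_top (X :|: Y) == k]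
     && has_arc i (i + m).-1 (X :|: Y)
     && (([set a in X :|: Y | in_window i m a],
          [set a in X :|: Y | in_window (i + m) (L.+1 - m) a]) == (X, Y)))
  = ([&& secondary X, within i m X & has_arc i (i + m).-1 X]
     && [&& secondary Y, within (i + m) (L.+1 - m) Y & (n_top Y).+1 == k]).
Proof.
rewrite !(has_arcE _ a01 a02).
have a0_outer b : b \in X -> within i m X -> (a0.1 <= b.1)%N /\ (b.2 <= a0.2)%N.
  by move=> bX iX; have [h1 h2] := within_bounds iX bX; rewrite a01 a02; split; lia.
apply/idP/idP.
  move=> /andP[/andP[/and3P[sU iU nU] hU] /eqP [e1 e2]].
  have sX : secondary X by apply: secondary_subset sU; apply: subsetUl.
  have sY : secondary Y by apply: secondary_subset sU; apply: subsetUr.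
  have iX : within i m X.
    apply: withinI => a aX.
    have : a \in [set a in X :|: Y | in_window i m a] by rewrite e1.
    by rewrite inE => /andP[_ /andP[h1 h2]].
  have iY : within (i + m) (L.+1 - m) Y.
    apply: withinI => a aY.
    have : a \in [set a in X :|: Y | in_window (i + m) (L.+1 - m) a] by rewrite e2.
    by rewrite inE => /andP[_ /andP[h1 h2]].
  have a0X : a0 \in X.
    by rewrite -e1 inE hU /in_window a01 a02 /=; apply/andP; split; lia.
  rewrite (n_top_juxt (mid := i + m)) // in nU; first last.
  - by move=> b bY; have [h1 _] := within_bounds iY bY.
  - by move=> b bX; have [_ h2] := within_bounds iX bX.
  rewrite (n_top_enclosed sX a0X) ?add1n in nU; last by move=> b bX; apply: a0_outer.
  by rewrite sX iX a0X sY iY nU.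
move=> /andP[/and3P[sX iX a0X] /and3P[sY iY nY]].
have hXb a : a \in X -> (a.2 < i + m)%N by move=> aX; have [_ h2] := within_bounds iX aX.
have hYb a : a \in Y -> (i + m <= a.1)%N by move=> aY; have [h1 _] := within_bounds iY aY.
rewrite (secondary_juxt sX sY hXb hYb) (n_top_juxt sX sY hXb hYb).
rewrite (n_top_enclosed sX a0X) ?add1n ?nY; last by move=> b bX; apply: a0_outer.
rewrite (_ : a0 \in X :|: Y); last by rewrite inE a0X.
rewrite /= !andbT; apply/andP; split.
  apply: withinI => b; rewrite inE => /orP[bX|bY].
    by have [h1 h2] := within_bounds iX bX; split; lia.
  by have [h1 h2] := within_bounds iY bY; split; lia.
apply/eqP; congr pair; apply/setP => b; rewrite !inE.
  case bX: (b \in X); first by rewrite (within_in_window iX bX).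
  by case bY: (b \in Y) => //=; rewrite (in_window_before sY iY bY).
case bY: (b \in Y); first by rewrite orbT (within_in_window iY bY).
by case bX: (b \in X) => //=; rewrite (in_window_after _ sX iX bX).
Qed.

End FirstArc.

Lemma wtop_first_arc k i L m : (i + L.+1 <= N)%N -> (m < L.+2)%N ->
  \sum_(S | [&& secondary S, within i L.+1 S & n_top S == k] && has_arc i (i + m).-1 S)
     weight R S
  = wclosed i m * wtop_pred k (i + m) (L.+1 - m).
Proof.
move=> hN hm.
case: (leqP m 1) => hm1.
  rewrite wclosed_small ?mul0r; last lia.
  rewrite big_pred0 // => S; apply/negP.
  move=> /andP[/and3P[sS _ _] /has_arcP[a [aS h1 h2]]].
  by have := secondary_gap sS aS; lia.
have hx : (i < N)%N by lia.
have hy : ((i + m).-1 < N)%N by lia.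
pose a0 : A := (Ordinal hx, Ordinal hy).
have a01 : (a0.1 : nat) = i by [].
have a02 : (a0.2 : nat) = (i + m).-1 by [].
have m_le : (m <= L.+1)%N by lia.
rewrite /wclosed /wtop_pred big_distrlr pair_big /=.
rewrite (reindex_onto (fun p : {set A} * {set A} => p.1 :|: p.2)
   (fun S => ([set a in S | in_window i m a],
              [set a in S | in_window (i + m) (L.+1 - m) a]))) /=; last first.
  move=> S /andP[/and3P[sS iS _]]; rewrite (has_arcE _ a01 a02) => hS.
  apply/setP => b; rewrite !inE; case bS: (b \in S) => //=.
  exact: (in_window_split hm1 m_le a01 a02 sS iS hS).
symmetry; apply: eq_big => [[X Y] | [X Y] /andP[/and3P[sX iX _] /and3P[sY iY _]]] /=.
  by rewrite (first_arc_split_pred hm1 m_le a01 a02 k X Y).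
have hXb a : a \in X -> (a.2 < i + m)%N by move=> aX; have [_ h2] := within_bounds iX aX.
have hYb a : a \in Y -> (i + m <= a.1)%N by move=> aY; have [h1 _] := within_bounds iY aY.
by rewrite (weight_juxt R sX sY hXb hYb).
Qed.

(* Either vertex [i] is unpaired, or it opens an arc [(i, i + m - 1)]. *)
Lemma wtop_rec k i L : (i + L.+1 <= N)%N ->
  wtop k i L.+1
  = wtop k i.+1 L + \sum_(m < L.+2) wclosed i m * wtop_pred k (i + m) (L.+1 - m).
Proof.
move=> hN; rewrite /wtop (bigID (fun S => [exists a in S, starts_at i a])) /= addrC.
congr (_ + _).
  apply: eq_bigl => S; rewrite -within_shift.
  by case: (secondary S); case: (n_top S == k); case: (within i L.+1 S);
     case: [exists a in S, starts_at i a].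
transitivity (\sum_(S | [&& secondary S, within i L.+1 S & n_top S == k]
                        && [exists a in S, starts_at i a])
   \sum_(m < L.+2) (if has_arc i (i + m).-1 S then weight R S else 0)).
  by apply: eq_bigr => S /andP[/and3P[sS iS _] hv]; rewrite sum_first_arc.
rewrite exchange_big /=; apply: eq_bigr => m _.
rewrite -(wtop_first_arc k hN (ltn_ord m)) [RHS]big_mkcond [LHS]big_mkcond /=.
apply: eq_bigr => S; case: ([&& _, _ & _]) => //=.
case hv: [exists a in S, starts_at i a]; case ha: (has_arc _ _ S) => //=.
by move: (has_arc_starts_at ha); rewrite hv.
Qed.

Lemma within_full S : within 0 N S.
Proof. by apply: withinI => a _; split; [|rewrite add0n]. Qed.

Lemma f0star_wclosed : f0star R N = wclosed 0 N.
Proof. by rewrite /f0star /wclosed; apply: eq_bigl => S; rewrite within_full /has_arc add0n. Qed.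

Lemma f0_wtop : f0 R N = \sum_(k < top_bound N) wtop k 0 N.
Proof.
rewrite /f0 (partition_n_top _ (fun _ T => weight R T)); apply: eq_bigr => k _.
by apply: eq_bigl => S; rewrite within_full.
Qed.

End Windows.

Unset Implicit Arguments. Set Strict Implicit.

Section GeneratingFunctions.
Context {R : realType}.
Local Notation F := (f0star R).
Local Notation geom := (fps_geom R).

Definition top_gf (k : nat) : fps R := fps_mul (fps_pow (fps_mul F geom) k) geom.

Definition trunc_geom (G : fps R) (L : nat) : {poly R} :=
  fps_trunc L G * fps_trunc L geom.

Lemma f0star_small L : (L <= 2)%N -> F L = 0.
Proof. by move=> hL; rewrite f0star_wclosed wclosed_small. Qed.

Lemma trunc_geom0 G L : G 0%N = 0 -> (trunc_geom G L)`_0 = 0.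
Proof.
move=> G0; rewrite /trunc_geom.
by rewrite -(fps_agreeM (fps_agree_trunc L G) (fps_agree_trunc L geom) 0%N) ?fps_mul_geom0.
Qed.

Lemma fps_agree_top_gf k L : fps_agree L (top_gf k) (trunc_geom F L ^+ k * fps_trunc L geom).
Proof.
apply: fps_agreeM (fps_agree_trunc L geom).
exact: fps_agreeX k (fps_agreeM (fps_agree_trunc L F) (fps_agree_trunc L geom)).
Qed.

Lemma top_gfE k L : top_gf k L = (trunc_geom F L ^+ k * fps_trunc L geom)`_L.
Proof. exact: fps_agree_top_gf. Qed.

Lemma top_gf_lt k L : (L < k)%N -> top_gf k L = 0.
Proof. by move=> h; rewrite top_gfE coef_exprM_lt // trunc_geom0 // f0star_small. Qed.

Lemma top_gf0 L : top_gf 0 L = 1.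
Proof. by rewrite top_gfE expr0 mul1r coef_poly ltnS leqnn. Qed.

Lemma top_gfS k L : top_gf k.+1 L = \sum_(j < L.+1) fps_mul F (top_gf k) j.
Proof.
rewrite -fps_mul_geomE top_gfE.
have hFG := fps_agreeM (fps_agree_trunc L F) (fps_agree_top_gf k L).
rewrite (fps_agreeM hFG (fps_agree_trunc L geom) L (leqnn L)).
suff -> : trunc_geom F L ^+ k.+1 * fps_trunc L geom
          = fps_trunc L F * (trunc_geom F L ^+ k * fps_trunc L geom) * fps_trunc L geom by [].
by rewrite /trunc_geom exprS; ring.
Qed.

Definition top_gf_pred (k n : nat) : R := if k is k'.+1 then top_gf k' n else 0.

Lemma top_gf_rec k L :
  top_gf k L.+1 = top_gf k L + \sum_(m < L.+2) F m * top_gf_pred k (L.+1 - m).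
Proof.
case: k => [|k]; last by rewrite !top_gfS big_ord_recr.
by rewrite !top_gf0 big1 ?addr0 // => m _; rewrite mulr0.
Qed.

Lemma sum_ord_trunc (H : nat -> R) L K : (L < K)%N -> (forall k, (L < k)%N -> H k = 0) ->
  \sum_(k < K) H k = \sum_(k < L.+1) H k.
Proof.
move=> hK hH; rewrite [RHS](big_ord_widen K H) // [RHS]big_mkcond.
by apply: eq_bigr => k _; case: ifP => // h; rewrite hH //; lia.
Qed.

Lemma sum_arc_weight_wtop N j L : (L.+1 < top_bound N)%N ->
  (forall k, wtop R N k j L.+1 = top_gf k L.+1) ->
  \sum_(k < top_bound N) arc_weight R k * wtop R N k j L.+1
  = \sum_(k < L.+2) arc_weight R k * top_gf k L.+1.
Proof.
move=> hK hW; under eq_bigr do rewrite hW.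
apply: (sum_ord_trunc (fun k => arc_weight R k * top_gf k L.+1)) => // k hk.
by rewrite top_gf_lt ?mulr0.
Qed.

(* Both sides obey the same recurrences in the window length [L]. *)
Lemma window_weights L : forall N i, (i + L <= N)%N ->
  wclosed R N i L = F L /\ forall k, wtop R N k i L = top_gf k L.
Proof.
elim/ltn_ind: L => L IH.
have closed N i : (i + L <= N)%N -> wclosed R N i L = F L.
  move=> hN; case: (leqP L 2) => hL; first by rewrite wclosed_small // f0star_small.
  have [L' eL] : exists L', L = L'.+3 by exists (L - 3)%N; lia.
  subst L; rewrite f0star_wclosed !wclosed_rec //.
  rewrite !sum_arc_weight_wtop //; try (rewrite /top_bound; nia).
    by move=> k; rewrite ((IH L'.+1 _ L'.+3 1 _).2 k) //; lia.
  by move=> k; rewrite ((IH L'.+1 _ N i.+1 _).2 k) //; lia.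
move=> N i hN; split; first exact: closed.
move=> k; case: L IH hN closed => [|L] IH hN closed.
  by rewrite wtop0; case: k => [|k]; [rewrite top_gf0 | rewrite top_gf_lt].
rewrite wtop_rec // top_gf_rec ((IH L _ N i.+1 _).2 k) //; last lia.
congr (_ + _); apply: eq_bigr => -[m hm] _ /=.
case: (posnP m) => [->|m_gt0]; first by rewrite wclosed_small // f0star_small // !mul0r.
have -> : wclosed R N i m = F m.
  case: (ltnP m L.+1) => hmL; first by rewrite ((IH m _ N i _).1) //; lia.
  have -> : m = L.+1 by lia.
  by apply: closed; lia.
case: k => [|k]; first by rewrite wtop_pred0.
by rewrite wtop_predS ((IH (L.+1 - m)%N _ N (i + m)%N _).2 k) //; lia.
Qed.

Lemma f0star_rec L : F L.+3 = \sum_(k < L.+2) arc_weight R k * top_gf k L.+1.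
Proof.
rewrite f0star_wclosed wclosed_rec // sum_arc_weight_wtop //; first by rewrite /top_bound; nia.
by move=> k; rewrite ((window_weights L.+1 L.+3 1 _).2 k).
Qed.

End GeneratingFunctions.

Section FunctionalEquation.
Context {R : realType}.
Local Notation F := (f0star R).
Local Notation geom := (fps_geom R).

Lemma rhs_eq_small (G : fps R) n : (n < 2)%N -> rhs_eq G n = 0.
Proof. by move=> h; rewrite /rhs_eq /fps_add /fps_scale !fps_mul_X2E h !mulr0 !addr0. Qed.

(* The coefficient of [z^(L+2)] of the right-hand side only depends on the
   coefficients of [G] up to [z^L]. *)
Lemma rhs_eqE (G : fps R) L : G 0%N = 0 -> rhs_eq G L.+2 =
  6 / 16 * expR (2^-1) * (if L is 0 then 0 else 1)
  + (6 / 16 * expR 1 * ((fps_trunc L geom) ^+ 2 * fps_trunc L G)`_L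
  + 6 / 16 * expR (-5)
    * ((trunc_geom G L ^+ 2 * \sum_(k < L.+1) trunc_geom G L ^+ k) * fps_trunc L geom)`_L).
Proof.
move=> G0; rewrite /rhs_eq /fps_add /fps_scale !fps_mul_X2E /= !subSS !subn0.
have hQ := fps_agreeM (fps_agree_trunc L G) (fps_agree_trunc L geom).
have hQ0 : fps_mul G geom 0%N = 0 by rewrite fps_mul_geom0.
rewrite (fps_agreeM (fps_agreeXn L 1) (fps_agree_trunc L geom) L (leqnn L)) coefXnM.
rewrite (fps_agreeM (fps_agreeX 2 (fps_agree_trunc L geom)) (fps_agree_trunc L G) L (leqnn L)).
rewrite (fps_agreeM (fps_agreeM (fps_agreeX 2 hQ) (fps_agree_inv1m hQ hQ0))
           (fps_agree_trunc L geom) L (leqnn L)).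
congr (_ * _ + _); case: L {hQ hQ0} => [|L] //=.
by rewrite coef_poly subn1 /= ltnS leqnSn.
Qed.

Lemma f0star0 : F 0%N = 0.
Proof. by rewrite f0star_small. Qed.

Lemma f0star_fixpoint : F = rhs_eq F.
Proof.
apply: boolp.funext => n.
case: (ltnP n 2) => hn; first by rewrite rhs_eq_small // f0star_small //; lia.
have [L ->] : exists L, n = L.+2 by exists (n - 2)%N; lia.
have geom2_F : ((fps_trunc L geom) ^+ 2 * fps_trunc L F)`_L = top_gf 1 L.
  suff -> : fps_trunc L geom ^+ 2 * fps_trunc L F = trunc_geom F L ^+ 1 * fps_trunc L geom.
    by rewrite top_gfE.
  by rewrite /trunc_geom; ring.
have multiloop : ((trunc_geom F L ^+ 2 * \sum_(k < L.+1) trunc_geom F L ^+ k)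
                   * fps_trunc L geom)`_L = \sum_(k < L.+1) top_gf k.+2 L.
  rewrite mulr_sumr mulr_suml coef_sum; apply: eq_bigr => k _.
  by rewrite top_gfE -exprD add2n.
rewrite (rhs_eqE F L f0star0) geom2_F multiloop.
case: L {hn geom2_F multiloop} => [|L].
  by rewrite f0star_small // big_ord1 !top_gf_lt // !mulr0 !addr0.
have multiloop_vanish :
    \sum_(k < L.+2) top_gf k.+2 L.+1 = \sum_(k < L) top_gf k.+2 L.+1 :> R.
  by rewrite !big_ord_recr /= !top_gf_lt // !addr0.
rewrite multiloop_vanish f0star_rec !big_ord_recl top_gf0 (big_distrr (6 / 16 * expR (-5))).
by rewrite /arc_weight /loop_exponent /=.
Qed.

Lemma rhs_eq_unique (G : fps R) : G 0%N = 0 -> G = rhs_eq G -> G = F.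
Proof.
move=> G0 hG; apply: boolp.funext => n; elim/ltn_ind: n => -[|n] IH.
  by rewrite G0 f0star0.
rewrite hG f0star_fixpoint; case: n IH => [|L] IH; first by rewrite !rhs_eq_small.
rewrite !rhs_eqE /trunc_geom //; last exact: f0star0.
by have -> : fps_trunc L G = fps_trunc L F by apply: eq_poly => i hi; apply: IH; lia.
Qed.

Lemma f0_gf : f0 R = fps_mul geom (fps_inv1m (fps_mul F geom)).
Proof.
apply: boolp.funext => L.
rewrite f0_wtop (eq_bigr (fun k : 'I_(top_bound L) => top_gf k L)); last first.
  by move=> k _; rewrite ((window_weights L L 0 _).2 k).
rewrite (sum_ord_trunc (fun k => top_gf k L) L); last by move=> k hk; rewrite top_gf_lt.
  have hQ := fps_agreeM (fps_agree_trunc L F) (fps_agree_trunc L geom).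
  rewrite (fps_agreeM (fps_agree_trunc L geom) (fps_agree_inv1m hQ _) L (leqnn L)).
    by rewrite mulr_sumr coef_sum; apply: eq_bigr => k _; rewrite top_gfE mulrC.
  by rewrite fps_mul_geom0 f0star0.
by rewrite /top_bound; nia.
Qed.

End FunctionalEquation.

Theorem lemma3 (R : realType) :
  f0star R = rhs_eq (f0star R) /\
  (forall G : fps R, G 0%N = 0%R -> G = rhs_eq G -> G = f0star R) /\
  f0 R = fps_mul (fps_geom R) (fps_inv1m (fps_mul (f0star R) (fps_geom R))).
Proof. by split; [exact: f0star_fixpoint | split; [exact: rhs_eq_unique | exact: f0_gf]]. Qed.
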